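(* Let $\mathcal{H}$ be a real Hilbert space and $F:\mathcal{H}\rightrightarrows\mathcal{H}$ a set-valued operator with $\operatorname{zer}F:=\{x:0\in F(x)\}\neq\varnothing$. Let $(\gamma_n)_{n}\subset(0,+\infty)$, and let $(\alpha_n)_n$ be nondecreasing with $\alpha_n\in[0,\alpha]$ for all $n$, for some $\alpha\in[0,\tfrac13)$. Assume there is a linear map $v:\mathcal{H}\to\mathcal{H}$ such that the pair $(F,v)$ is monotone and, for every $n$, $\gamma_nF+v$ is injective and $\operatorname{ran}v\subset\operatorname{ran}(\gamma_nF+v)$. Let $x_0,x_1\in\mathcal{H}$ and for $n\ge1$ define \[ y_n=x_n+\alpha_n(x_n-x_{n-1}),\qquad x_{n+1}=(\gamma_nF+v)^{-1}\big(v(y_n)\big), \] i.e. $x_{n+1}$ is the unique point with $v(y_n)\in\gamma_nF(x_{n+1})+v(x_{n+1})$. Let $x^*\in\operatorname{zer}F$ and $a_n:=\|v(x_n)-v(x^* )\|^2$. Then (i) the sequence $(a_n)$ is bounded; (ii) $\sum_{n=1}^{\infty}\|v(x_n)-v(x_{n-1})\|^2<+\infty$.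
   Context: For set-valued $F_1,F_2:\mathcal{H}\rightrightarrows\mathcal{H}$, the pair $(F_1,F_2)$ is monotone if $\langle x_1^*-y_1^*,x_2^*-y_2^*\rangle\ge0$ for all $x,y\in\mathcal{H}$, $x_1^*\in F_1(x)$, $y_1^*\in F_1(y)$, $x_2^*\in F_2(x)$, $y_2^*\in F_2(y)$. $\operatorname{ran}$ denotes the range. *)

From HB Require Import structures.
From mathcomp Require Import all_boot all_order all_algebra.
From mathcomp Require Import all_classical all_reals all_analysis.
Set Implicit Arguments. Unset Strict Implicit. Unset Printing Implicit Defensive.
Import Order.TTheory GRing.Theory Num.Theory.
Local Open Scope ring_scope.

(* A real Hilbert space is represented by a real vector space V (lmodType R)
   together with a function ip : V -> V -> R that is an inner product and
   whose induced norm is complete. *)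

Definition hnorm (R : realType) (V : lmodType R) (ip : V -> V -> R) (x : V) : R :=
  Num.sqrt (ip x x).

Definition is_inner_product (R : realType) (V : lmodType R) (ip : V -> V -> R) : Prop :=
  [/\ (forall x y, ip x y = ip y x),
      (forall (a : R) x y z, ip (a *: x + y) z = a * ip x z + ip y z),
      (forall x, 0 <= ip x x) &
      (forall x, ip x x = 0 -> x = 0)].

Definition ip_complete (R : realType) (V : lmodType R) (ip : V -> V -> R) : Prop :=
  forall u : nat -> V,
    (forall e : R, 0 < e -> exists N : nat, forall m n : nat,
        (N <= m)%N -> (N <= n)%N -> hnorm ip (u m - u n) < e) ->
    exists l : V, forall e : R, 0 < e -> exists N : nat, forall n : nat,
        (N <= n)%N -> hnorm ip (u n - l) < e.

Definition is_hilbert (R : realType) (V : lmodType R) (ip : V -> V -> R) : Prop :=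
  is_inner_product ip /\ ip_complete ip.

(* Set-valued operators H ⇉ H are relations: F x y  <->  y ∈ F(x). *)

Definition monotone_pair (R : realType) (V : lmodType R) (ip : V -> V -> R)
  (F1 F2 : V -> V -> Prop) : Prop :=
  forall x y x1 y1 x2 y2, F1 x x1 -> F1 y y1 -> F2 x x2 -> F2 y y2 ->
    0 <= ip (x1 - y1) (x2 - y2).

Definition single_valued (V : Type) (f : V -> V) : V -> V -> Prop :=
  fun x y => y = f x.

Definition scaled_plus (R : realType) (V : lmodType R) (g : R)
  (F : V -> V -> Prop) (v : V -> V) : V -> V -> Prop :=
  fun x y => exists f, F x f /\ y = g *: f + v x.

Definition op_injective (V : Type) (G : V -> V -> Prop) : Prop :=
  forall x1 x2 y, G x1 y -> G x2 y -> x1 = x2.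

Definition op_range (V : Type) (G : V -> V -> Prop) : V -> Prop :=
  fun y => exists x, G x y.

Definition zer (R : realType) (V : lmodType R) (F : V -> V -> Prop) : V -> Prop :=
  fun x => F x 0.

From HB Require Import structures.
From mathcomp Require Import all_boot all_order all_algebra.
From mathcomp Require Import all_classical all_reals all_analysis.
From mathcomp Require Import ring lra.
Import Order.TTheory GRing.Theory Num.Theory numFieldNormedType.Exports.
Set Implicit Arguments. Unset Strict Implicit. Unset Printing Implicit Defensive.
Local Open Scope ring_scope.

(* Write p_n := v x_n and s := v x*.  Monotonicity of (F, v) at the points
   x_{n+1} and x* gives <p_n + a_n (p_n - p_{n-1}) - p_{n+1}, p_{n+1} - s> >= 0,
   and a three-point identity turns this into
     phi_{n+1} - phi_n - a_n (phi_n - phi_{n-1}) <= 2 a_n d_{n-1} - (1 - a_n) d_n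
   for phi_n := |p_n - s|^2 and d_n := |p_{n+1} - p_n|^2.  As a_n is
   nondecreasing and bounded by a < 1/3, the energy
   phi_n - a_n phi_{n-1} + 2 a_n d_{n-1} drops by at least (1 - 3a) d_n at each
   step; this bounds phi and the partial sums of the d_n. *)

Lemma affine_recursion_bounded (R : realFieldType) (u : nat -> R) (q C : R) :
  (forall n, 0 <= u n) -> 0 <= q < 1 -> (forall n, u n.+1 <= q * u n + C) ->
  forall n, u n <= u 0 + `|C| / (1 - q).
Proof.
move=> u_ge0 /andP[q_ge0 q_lt1] u_rec; set D := `|C| / (1 - q).
have D_ge0 : 0 <= D by rewrite divr_ge0 // subr_ge0 ltW.
have D_fix : D * (1 - q) = `|C| by rewrite divfK // subr_eq0 gt_eqF.
elim=> [|n IH]; first by rewrite lerDl.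
have := u_rec n; have := ler_wpM2l q_ge0 IH; have := ler_norm C.
have := mulr_ge0 q_ge0 (u_ge0 0); have := u_ge0 0; nra.
Qed.

Lemma nonneg_series_bounded_cvgn (R : realType) (u : nat -> R) (B : R) :
  (forall n, 0 <= u n) -> (forall n, series u n <= B) -> cvgn (series u).
Proof.
move=> u_ge0 le_B; apply: nondecreasing_is_cvgn.
  exact: (@nondecreasing_series _ u xpredT 0).
by exists B => _ [n _ <-].
Qed.

Section InertialLyapunov.
Variables (R : realType) (phi d a : nat -> R) (al : R).
Hypotheses (phi_ge0 : forall n, 0 <= phi n) (d_ge0 : forall n, 0 <= d n).
Hypotheses (a_ge0 : forall n, 0 <= a n) (a_le : forall n, a n <= al).
Hypotheses (a_nd : forall n, a n <= a n.+1) (al_lt : 3 * al < 1).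
Hypothesis phi_step : forall n,
  phi n.+2 - phi n.+1 - a n * (phi n.+1 - phi n)
  <= 2 * a n * d n - (1 - a n) * d n.+1.

Let lyap n := phi n.+1 - a n * phi n + 2 * a n * d n.

Lemma lyapunov_decrease n : lyap n.+1 + (1 - 3 * al) * d n.+1 <= lyap n.
Proof.
have := phi_step n; have := a_le n; have := a_le n.+1; have := a_ge0 n.
have : 0 <= (a n.+1 - a n) * phi n.+1 by rewrite mulr_ge0 ?subr_ge0.
have : 0 <= (al - a n) * d n.+1 by rewrite mulr_ge0 ?subr_ge0.
have : 0 <= (al - a n.+1) * d n.+1 by rewrite mulr_ge0 ?subr_ge0.
rewrite /lyap; lra.
Qed.

Lemma lyapunov_telescope n :
  lyap n + (1 - 3 * al) * \sum_(0 <= k < n) d k.+1 <= lyap 0.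
Proof.
elim: n => [|n IH]; first by rewrite big_geq // mulr0 addr0.
rewrite big_nat_recr //= mulrDr; have := lyapunov_decrease n; lra.
Qed.

Lemma le_lyapunov n : phi n.+1 - al * phi n <= lyap n.
Proof.
have : 0 <= (al - a n) * phi n by rewrite mulr_ge0 ?subr_ge0.
have := mulr_ge0 (a_ge0 n) (d_ge0 n); rewrite /lyap; lra.
Qed.

Lemma lyapunov_le_init n : lyap n <= lyap 0.
Proof.
have : 0 <= (1 - 3 * al) * \sum_(0 <= k < n) d k.+1.
  by rewrite mulr_ge0 ?sumr_ge0 // subr_ge0 ltW.
have := lyapunov_telescope n; lra.
Qed.

Lemma lyapunov_bounded : exists K, forall n, phi n <= K.
Proof.
have al_lt1 : al < 1 by have := al_lt; lra.
exists (phi 0 + `|lyap 0| / (1 - al)).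
apply: (@affine_recursion_bounded _ _ al) => // [|n].
  by rewrite (le_trans (a_ge0 0) (a_le 0)).
have := le_lyapunov n; have := lyapunov_le_init n; lra.
Qed.

Lemma lyapunov_series_bounded : exists B, forall n, series d n <= B.
Proof.
have [K phi_le] := lyapunov_bounded.
have al_ge0 : 0 <= al := le_trans (a_ge0 0) (a_le 0).
exists (d 0 + (lyap 0 + al * K) / (1 - 3 * al)) => n.
have le_succ : series d n <= series d n.+1 by rewrite seriesSr lerDl.
apply: (le_trans le_succ).
rewrite /series /= big_nat_recl // lerD2l ler_pdivlMr ?subr_gt0 // mulrC.
have := lyapunov_telescope n; have := le_lyapunov n.
have := ler_wpM2l al_ge0 (phi_le n); have := phi_ge0 n.+1; lra.
Qed.

Lemma inertial_lyapunov : (exists K, forall n, phi n <= K) /\ cvgn (series d).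
Proof.
split; first exact: lyapunov_bounded.
have [B le_B] := lyapunov_series_bounded.
exact: nonneg_series_bounded_cvgn le_B.
Qed.

End InertialLyapunov.

Section InnerProduct.
Variables (R : realType) (V : lmodType R) (ip : V -> V -> R).
Hypothesis ip_inner : is_inner_product ip.

Lemma ipC x y : ip x y = ip y x.
Proof. by case: ip_inner. Qed.

Lemma ip_ge0 x : 0 <= ip x x.
Proof. by case: ip_inner. Qed.

Lemma ipDl x y z : ip (x + y) z = ip x z + ip y z.
Proof. by case: ip_inner => _ lin _ _; rewrite -[x]scale1r lin mul1r scale1r. Qed.

Lemma ipZl a x z : ip (a *: x) z = a * ip x z.
Proof.
have ip0l : ip 0 z = 0 by apply: (addrI (ip 0 z)); rewrite -ipDl !addr0.
by case: ip_inner => _ lin _ _; rewrite -[a *: x]addr0 lin ip0l addr0.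
Qed.

Lemma ipNl x z : ip (- x) z = - ip x z.
Proof. by rewrite -scaleN1r ipZl mulN1r. Qed.

Lemma ipDr x y z : ip z (x + y) = ip z x + ip z y.
Proof. by rewrite ipC ipDl !(ipC z). Qed.

Lemma ipZr a x z : ip z (a *: x) = a * ip z x.
Proof. by rewrite ipC ipZl ipC. Qed.

Lemma ipNr x z : ip z (- x) = - ip z x.
Proof. by rewrite ipC ipNl ipC. Qed.

Lemma hnorm_sqr x : hnorm ip x ^+ 2 = ip x x.
Proof. by rewrite sqr_sqrtr // ip_ge0. Qed.

Lemma inertial_three_point (p0 p1 p2 s : V) (t : R) :
  ip (p2 - s) (p2 - s) - ip (p1 - s) (p1 - s)
    - t * (ip (p1 - s) (p1 - s) - ip (p0 - s) (p0 - s))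
  = 2 * t * ip (p1 - p0) (p1 - p0) - (1 - t) * ip (p2 - p1) (p2 - p1)
    - t * ip (p2 - p1 - (p1 - p0)) (p2 - p1 - (p1 - p0))
    - 2 * ip (p1 + t *: (p1 - p0) - p2) (p2 - s).
Proof.
rewrite !(ipDl, ipDr, ipNl, ipNr, ipZl, ipZr).
rewrite (ipC p0 p1) (ipC p0 p2) (ipC p0 s) (ipC p1 p2) (ipC p1 s) (ipC p2 s).
ring.
Qed.

Lemma inertial_descent (p0 p1 p2 s : V) (t : R) : 0 <= t ->
  0 <= ip (p1 + t *: (p1 - p0) - p2) (p2 - s) ->
  ip (p2 - s) (p2 - s) - ip (p1 - s) (p1 - s)
    - t * (ip (p1 - s) (p1 - s) - ip (p0 - s) (p0 - s))
  <= 2 * t * ip (p1 - p0) (p1 - p0) - (1 - t) * ip (p2 - p1) (p2 - p1).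
Proof.
move=> t_ge0 mono; rewrite inertial_three_point.
have := mulr_ge0 t_ge0 (ip_ge0 (p2 - p1 - (p1 - p0))); lra.
Qed.

Lemma resolvent_step_monotone (F : V -> V -> Prop) (v : V -> V) (g : R)
  (x' y s : V) :
  monotone_pair ip F (single_valued v) -> zer F s -> 0 < g ->
  scaled_plus g F v x' (v y) -> 0 <= ip (v y - v x') (v x' - v s).
Proof.
move=> mono Fs g_gt0 [f [Ff ->]]; rewrite addrK ipZl pmulr_rge0 //.
by have := mono _ _ _ _ _ _ Ff Fs erefl erefl; rewrite subr0.
Qed.

End InnerProduct.

Theorem corollary4p1 (R : realType) (V : lmodType R) (ip : V -> V -> R)
  (F : V -> V -> Prop) (gamma alpha_ : nat -> R) (alpha : R)
  (v : {linear V -> V}) (x : nat -> V) (xstar : V) :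
  is_hilbert ip ->
  (exists z, zer F z) ->
  (forall n, 0 < gamma n) ->
  0 <= alpha -> alpha < 1 / 3 ->
  (forall n, 0 <= alpha_ n /\ alpha_ n <= alpha) ->
  (forall n m, (n <= m)%N -> alpha_ n <= alpha_ m) ->
  monotone_pair ip F (single_valued v) ->
  (forall n, op_injective (scaled_plus (gamma n) F v)) ->
  (forall n y, op_range (single_valued v) y ->
       op_range (scaled_plus (gamma n) F v) y) ->
  (forall n, (1 <= n)%N ->
       scaled_plus (gamma n) F v (x n.+1)
         (v (x n + alpha_ n *: (x n - x n.-1)))) ->
  zer F xstar ->
  (exists M : R, forall n, hnorm ip (v (x n) - v xstar) ^+ 2 <= M) /\
  cvgn (series (fun n => hnorm ip (v (x n.+1) - v (x n)) ^+ 2)).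
Proof.
(* Completeness, injectivity and the range condition only guarantee that the
   iteration is well defined; here the iterates are given. *)
move=> [ip_inner _] _ gamma_gt0 _ alpha_lt alpha_bd alpha_nd mono _ _ iter
  zer_xstar.
pose phi n := ip (v (x n) - v xstar) (v (x n) - v xstar).
pose d n := ip (v (x n.+1) - v (x n)) (v (x n.+1) - v (x n)).
have phi_step n : phi n.+2 - phi n.+1 - alpha_ n.+1 * (phi n.+1 - phi n)
                  <= 2 * alpha_ n.+1 * d n - (1 - alpha_ n.+1) * d n.+1.
  apply: inertial_descent => //; first by case: (alpha_bd n.+1).
  have := resolvent_step_monotone ip_inner mono zer_xstar (gamma_gt0 n.+1)
            (iter n.+1 isT).
  by rewrite linearD linearZ linearB.
have alpha3_lt1 : 3 * alpha < 1 by lra.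
have [[K phi_le] d_cvg] := inertial_lyapunov
  (fun n => ip_ge0 ip_inner _) (fun n => ip_ge0 ip_inner _)
  (fun n => (alpha_bd n.+1).1) (fun n => (alpha_bd n.+1).2)
  (fun n => alpha_nd _ _ (leqnSn n.+1)) alpha3_lt1 phi_step.
split; first by exists K => n; rewrite (hnorm_sqr ip_inner); apply: phi_le.
by under eq_fun do rewrite (hnorm_sqr ip_inner).
Qed.
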